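(* Let $K$ be a positive integer dividing $T$ and $\epsilon,\delta,\eta>0$, and suppose $\widehat{\mathcal K}:=\{\mathbf x\in\mathcal K:\ g_t(\mathbf x)\le0\ \forall t\in[T]\}\neq\emptyset$. Then the iterates $\{\mathbf x_m,\lambda_m\}$ of Algorithm PD (described in the context) satisfy, for every $\mathbf x\in\widehat{\mathcal K}$ and every $\lambda\ge0$, $$\sum_{t=1}^{T}\Big(\mathcal L_t(\mathbf x_{m(t)},\lambda)-\mathcal L_t(\mathbf x,\lambda_{m(t)})\Big)\le\frac{2R^2}{\eta}+\frac{\lambda^2}{2\eta}+G_f\sqrt{3\epsilon}\,T+G_f^2\eta KT+4G_g^2R^2\eta KT+G_g\sqrt{3\epsilon}\,K\sum_{m=1}^{T/K}\lambda_m+\big(\delta^2\eta^3K^2+G_g^2\eta K^2\big)\sum_{m=1}^{T/K}\lambda_m^2,$$ where $\mathcal L_t(\mathbf x,\lambda):=f_t(\mathbf x)+\lambda g_t^+(\mathbf x)-\frac{\delta\eta}{2}\lambda^2$.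
   Context: Let $\mathcal K\subset\mathbb R^n$ be convex and compact with $\mathbf 0\in\mathcal K\subseteq R\mathcal B$, where $\mathcal B$ is the closed origin-centered unit Euclidean ball and $R>0$. There are $T$ rounds with an arbitrary sequence of functions $f_1,\dots,f_T,g_1,\dots,g_T:\mathbb R^n\to\mathbb R$, each convex on $R\mathcal B$, such that every subgradient of every $f_t$ (resp. $g_t$) at points of $R\mathcal B$ has Euclidean norm at most $G_f$ (resp. $G_g$). Write $g_t^+(\mathbf x)=\max\{g_t(\mathbf x),0\}$. At the end of round $t$ the functions $f_t,g_t$ are revealed to the algorithm. For a block size $K$ (a positive integer dividing $T$) let $m(t)=\lceil t/K\rceil$ and $\mathcal T_m=\{(m-1)K+1,\dots,mK\}$ for $m\in[T/K]$. $\Pi_{R\mathcal B}$ denotes Euclidean projection onto $R\mathcal B$. Linear optimization oracle (LOO) of a convex compact set $S$: given $\mathbf c\in\mathbb R^n$, returns some point of $\arg\min_{\mathbf x\in S}\mathbf c^\top\mathbf x$. Procedure FW$(\mathbf x_1,\mathbf y,\epsilon;S)$ with $\mathbf x_1\in S$: for $i=1,2,\dots$: call the LOO of $S$ to get $\mathbf v_i\in\arg\min_{\mathbf x\in S}(\mathbf x_i-\mathbf y)^\top\mathbf x$; if $(\mathbf x_i-\mathbf y)^\top(\mathbf x_i-\mathbf v_i)\le\epsilon$ or $\|\mathbf x_i-\mathbf y\|^2\le 3\epsilon$, return $\mathbf x_i$; otherwise let $\sigma_i\in\arg\min_{\sigma\in[0,1]}\|\mathbf y-\mathbf x_i-\sigma(\mathbf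 v_i-\mathbf x_i)\|^2$ and $\mathbf x_{i+1}=\mathbf x_i+\sigma_i(\mathbf v_i-\mathbf x_i)$. Procedure $\mathcal O_{AFP}(\mathbf y_1,\mathbf x_0,\epsilon,S)$ with $\mathbf x_0\in S$: if $\|\mathbf x_0-\mathbf y_1\|^2\le3\epsilon$ return $(\mathbf x_0,\mathbf y_1)$. Otherwise for $i=1,2,\dots$: $\mathbf x_i=$FW$(\mathbf x_{i-1},\mathbf y_i,\epsilon;S)$; if $\|\mathbf x_i-\mathbf y_i\|^2>3\epsilon$ set $\mathbf y_{i+1}=\mathbf y_i-\frac23(\mathbf y_i-\mathbf x_i)$, else return $(\mathbf x_i,\mathbf y_i)$. Algorithm PD (parameters $T,K,\epsilon,\delta,\eta>0$): set $\mathbf x_1=\widetilde{\mathbf y}_1$ to an arbitrary point of $\mathcal K$ and $\lambda_1=0$. For $m=1,\dots,T/K$: for each $t\in\mathcal T_m$, play $\mathbf x_m$, observe $f_t,g_t$, and pick $\nabla f_t\in\partial f_t(\mathbf x_m)$, $\nabla g_t^+\in\partial g_t^+(\mathbf x_m)$. Then set $\nabla_{m,\mathbf x}=\sum_{t\in\mathcal T_m}(\nabla f_t+\lambda_m\nabla g_t^+)$, $\nabla_{m,\lambda}=\sum_{t\in\mathcal T_m}(g_t^+(\mathbf x_m)-\delta\eta\lambda_m)$, $\mathbf y_{m+1}=\Pi_{R\mathcal B}[\widetilde{\mathbf y}_m-\eta\nabla_{m,\mathbf x}]$, $(\mathbf x_{m+1},\widetilde{\mathbf y}_{m+1})=\mathcal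 O_{AFP}(\mathbf y_{m+1},\mathbf x_m,\epsilon,\mathcal K)$, and $\lambda_{m+1}=\max\{0,\lambda_m+\eta\nabla_{m,\lambda}\}$. On round $t$ the played point is $\mathbf x_{m(t)}$.
   Formalization: Each fₜ and gₜ is convex on all of ℝⁿ rather than only on $R\mathcal B$, and subgradients are the global ones (h with fₜ(x) + hᵀ(z − x) ≤ fₜ(z) for every z ∈ ℝⁿ). The paper assumes this as well. *)

From HB Require Import structures.
From mathcomp Require Import all_boot all_order all_algebra.
From mathcomp Require Import all_classical all_reals all_analysis.
Set Implicit Arguments. Unset Strict Implicit. Unset Printing Implicit Defensive.
Import Order.TTheory GRing.Theory Num.Theory.
Import numFieldNormedType.Exports.
Local Open Scope classical_set_scope.
Local Open Scope ring_scope.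

Section Defs.
Variables (R : realType) (n : nat).
Notation vec := 'rV[R]_n.

Definition dotv (u v : vec) : R := \sum_(i < n) u ord0 i * v ord0 i.
Definition enorm (u : vec) : R := Num.sqrt (dotv u u).

Definition ball_set (r : R) : set vec := [set x | enorm x <= r].

Definition convex_set_of (S : set vec) : Prop :=
  forall x y, S x -> S y -> forall th : R, 0 <= th <= 1 ->
    S (th *: x + (1 - th) *: y).

Definition convex_fun_on (S : set vec) (f : vec -> R) : Prop :=
  forall x y, S x -> S y -> forall th : R, 0 <= th <= 1 ->
    f (th *: x + (1 - th) *: y) <= th * f x + (1 - th) * f y.

Definition subgrad (f : vec -> R) (x h : vec) : Prop :=
  forall z, f x + dotv h (z - x) <= f z.

Definition posp (f : vec -> R) : vec -> R := fun x => Num.max (f x) 0.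

(* v is a possible output of the linear optimization oracle of S on c *)
Definition LOO (S : set vec) (c v : vec) : Prop :=
  S v /\ forall z, S z -> dotv c v <= dotv c z.

Definition proj (S : set vec) (v p : vec) : Prop :=
  S p /\ forall z, S z -> enorm (v - p) <= enorm (v - z).

(* FW_run S eps x y out : some admissible run of FW(x, y, eps; S) returns out *)
Inductive FW_run (S : set vec) (eps : R) : vec -> vec -> vec -> Prop :=
| FW_stop x y v : LOO S (x - y) v ->
    (dotv (x - y) (x - v) <= eps \/ enorm (x - y) ^+ 2 <= 3 * eps) ->
    FW_run S eps x y x
| FW_step x y v sig out : LOO S (x - y) v ->
    ~ (dotv (x - y) (x - v) <= eps \/ enorm (x - y) ^+ 2 <= 3 * eps) ->
    0 <= sig <= 1 ->
    (forall s : R, 0 <= s <= 1 ->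
       enorm (y - x - sig *: (v - x)) ^+ 2 <= enorm (y - x - s *: (v - x)) ^+ 2) ->
    FW_run S eps (x + sig *: (v - x)) y out ->
    FW_run S eps x y out.

(* main loop of O_AFP started at iteration i with x_{i-1} = xp, y_i = y;
   outputs (xo, yo) *)
Inductive AFP_loop (S : set vec) (eps : R) : vec -> vec -> vec -> vec -> Prop :=
| AFP_ret xp y x : FW_run S eps xp y x -> enorm (x - y) ^+ 2 <= 3 * eps ->
    AFP_loop S eps xp y x y
| AFP_cont xp y x xo yo : FW_run S eps xp y x -> 3 * eps < enorm (x - y) ^+ 2 ->
    AFP_loop S eps x (y - (2 / 3) *: (y - x)) xo yo ->
    AFP_loop S eps xp y xo yo.

(* AFP_run S eps y1 x0 xo yo : some admissible run of O_AFP(y1, x0, eps, S)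
   returns (xo, yo) *)
Definition AFP_run (S : set vec) (eps : R) (y1 x0 xo yo : vec) : Prop :=
  (enorm (x0 - y1) ^+ 2 <= 3 * eps /\ xo = x0 /\ yo = y1) \/
  (3 * eps < enorm (x0 - y1) ^+ 2 /\ AFP_loop S eps x0 y1 xo yo).

End Defs.

(* m(t) = ceil(t / K) for t >= 1 *)
Definition mblk (K t : nat) : nat := (t.-1 %/ K).+1.

Definition lagr (R : realType) (n : nat) (delta eta : R)
  (ft gt : 'rV[R]_n -> R) (x : 'rV[R]_n) (lam : R) : R :=
  ft x + lam * posp gt x - delta * eta / 2 * lam ^+ 2.

(* (x, yt, y, lam, df, dg) is an admissible run of Algorithm PD:
   x m = x_m, yt m = tilde y_m, y m = y_m, lam m = lambda_m,
   df t, dg t = the subgradients picked at round t. *)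
Definition PD_run (R : realType) (n : nat) (Kset : set 'rV[R]_n) (Rad : R)
  (T K : nat) (eps delta eta : R) (f g : nat -> 'rV[R]_n -> R)
  (x yt y : nat -> 'rV[R]_n) (lam : R^nat) (df dg : nat -> 'rV[R]_n) : Prop :=
  [/\ Kset (x 1%N), yt 1%N = x 1%N, lam 1%N = 0,
      (forall t, (1 <= t <= T)%N ->
         subgrad (f t) (x (mblk K t)) (df t) /\
         subgrad (posp (g t)) (x (mblk K t)) (dg t)) &
      (forall m, (1 <= m <= T %/ K)%N ->
        let gx := \sum_((m.-1 * K).+1 <= t < (m * K).+1) (df t + lam m *: dg t) in
        let gl := \sum_((m.-1 * K).+1 <= t < (m * K).+1)
                     (posp (g t) (x m) - delta * eta * lam m) in
        [/\ proj (@ball_set _ n Rad) (yt m - eta *: gx) (y m.+1),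
            AFP_run Kset eps (y m.+1) (x m) (x m.+1) (yt m.+1) &
            lam m.+1 = Num.max 0 (lam m + eta * gl)])].

(* On block m the played point x_m is fixed, so the subgradient inequalities bound
   the K Lagrangian gaps by the linearisation <G_m, x_m - x> + (lambda - lambda_m) h_m,
   with G_m, h_m the primal and dual block gradients of the algorithm.  The primal
   update is a projected gradient step followed by O_AFP, which only moves tilde y
   closer to every point of K and returns x_{m+1} within sqrt(3 eps) of
   tilde y_{m+1}; the dual update is projected gradient ascent on [0, +oo).  Both
   telescope in the potential |tilde y_m - x|^2 + (lambda_m - lambda)^2 up to
   (eta/2)(|G_m|^2 + h_m^2), and |G_m|, |h_m| are controlled by G_f and G_g.
   The one non-elementary point is that subgradients of g_t^+ are bounded by G_g:
   this needs the existence of subgradients of convex functions on R^n (in the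
   form of the max formula), proved by a coordinatewise Hahn-Banach extension. *)

From Pilot Require Import Defs.
From HB Require Import structures.
From mathcomp Require Import all_boot all_order all_algebra.
From mathcomp Require Import all_classical all_reals all_analysis.
From mathcomp Require Import ring lra zify.
Set Implicit Arguments. Unset Strict Implicit. Unset Printing Implicit Defensive.
Import Order.TTheory GRing.Theory Num.Theory.
Import numFieldNormedType.Exports.
Local Open Scope classical_set_scope.
Local Open Scope ring_scope.

Section Euclid.
Variables (R : realType) (n : nat).
Implicit Types (u v w : 'rV[R]_n) (a : R).
Local Notation ball r := (@ball_set R n r).

Lemma dotvC u v : dotv u v = dotv v u.
Proof. by apply: eq_bigr => i _; rewrite mulrC. Qed.

Lemma dotvDl u v w : dotv (u + v) w = dotv u w + dotv v w.
Proof. by rewrite /dotv -big_split; apply: eq_bigr => i _; rewrite mxE mulrDl. Qed.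

Lemma dotvZl a u v : dotv (a *: u) v = a * dotv u v.
Proof. by rewrite /dotv mulr_sumr; apply: eq_bigr => i _; rewrite mxE mulrA. Qed.

Lemma dotvNl u v : dotv (- u) v = - dotv u v.
Proof. by rewrite -scaleN1r dotvZl mulN1r. Qed.

Lemma dotvBl u v w : dotv (u - v) w = dotv u w - dotv v w.
Proof. by rewrite dotvDl dotvNl. Qed.

Lemma dotv0l v : dotv 0 v = 0.
Proof. by rewrite -(scale0r 0) dotvZl mul0r. Qed.

Lemma dotvDr u v w : dotv w (u + v) = dotv w u + dotv w v.
Proof. by rewrite dotvC dotvDl !(dotvC w). Qed.

Lemma dotvZr a u v : dotv v (a *: u) = a * dotv v u.
Proof. by rewrite dotvC dotvZl dotvC. Qed.

Lemma dotvBr u v w : dotv w (u - v) = dotv w u - dotv w v.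
Proof. by rewrite !(dotvC w) dotvBl. Qed.

Lemma dotv0r v : dotv v 0 = 0.
Proof. by rewrite dotvC dotv0l. Qed.

Lemma dotv_suml I (r : seq I) (P : pred I) (F : I -> 'rV[R]_n) v :
  dotv (\sum_(i <- r | P i) F i) v = \sum_(i <- r | P i) dotv (F i) v.
Proof. by elim/big_rec2: _ => [|i w s _ <-]; rewrite ?dotv0l ?dotvDl. Qed.

Lemma dotvv_ge0 u : 0 <= dotv u u.
Proof. by apply: sumr_ge0 => i _; rewrite -expr2 sqr_ge0. Qed.

Lemma dotvv_eq0 u : (dotv u u == 0) = (u == 0).
Proof.
apply/idP/eqP => [/eqP uu0|->]; last by rewrite dotv0l.
apply/rowP => i; rewrite mxE; apply/eqP; rewrite -sqrf_eq0 expr2.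
have ge0 j : 0 <= u ord0 j * u ord0 j by rewrite -expr2 sqr_ge0.
by move/eqP: uu0; rewrite /dotv psumr_eq0 // => /allP/(_ i (mem_index_enum i)).
Qed.

Lemma dotvDZ a u v :
  dotv (u + a *: v) (u + a *: v) = dotv u u + 2 * a * dotv u v + a ^+ 2 * dotv v v.
Proof. by rewrite !dotvDl !dotvDr !dotvZl !dotvZr (dotvC v u); ring. Qed.

Lemma enorm_sqr u : enorm u ^+ 2 = dotv u u.
Proof. by rewrite sqr_sqrtr // dotvv_ge0. Qed.

Lemma enorm_ge0 u : 0 <= enorm u.
Proof. exact: sqrtr_ge0. Qed.

Lemma enorm0 : enorm (0 : 'rV[R]_n) = 0.
Proof. by rewrite /enorm dotv0l sqrtr0. Qed.

Lemma enormZ a u : enorm (a *: u) = `|a| * enorm u.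
Proof. by rewrite /enorm dotvZl dotvZr mulrA -expr2 sqrtrM ?sqr_ge0 // sqrtr_sqr. Qed.

Lemma enormN u : enorm (- u) = enorm u.
Proof. by rewrite -scaleN1r enormZ normrN normr1 mul1r. Qed.

Lemma dotv_sqr_le u v : dotv u v ^+ 2 <= dotv u u * dotv v v.
Proof.
have [->|v0] := eqVneq v 0; first by rewrite !dotv0r expr0n mulr0.
have vv_gt0 : 0 < dotv v v by rewrite lt_def dotvv_eq0 v0 dotvv_ge0.
set a := - (dotv u v / dotv v v).
have av : a * dotv v v = - dotv u v by rewrite /a mulNr divfK ?gt_eqF.
have := dotvv_ge0 (u + a *: v); rewrite dotvDZ => h.
have := mulr_ge0 (ltW vv_gt0) h; nra.
Qed.

Lemma cauchy_schwarz u v : dotv u v <= enorm u * enorm v.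
Proof.
rewrite -sqrtrM ?dotvv_ge0 //; apply: le_trans (ler_norm _) _.
by rewrite -sqrtr_sqr ler_sqrt ?dotv_sqr_le // mulr_ge0 ?dotvv_ge0.
Qed.

Lemma enormD u v : enorm (u + v) <= enorm u + enorm v.
Proof.
rewrite -(ler_pXn2r (_ : 0 < 2)%N) ?nnegrE ?addr_ge0 ?enorm_ge0 //.
rewrite -[v]scale1r enorm_sqr dotvDZ scale1r sqrrD -!enorm_sqr.
by have := cauchy_schwarz u v; lra.
Qed.

Lemma enorm_sum I (r : seq I) (P : pred I) (F : I -> 'rV[R]_n) :
  enorm (\sum_(i <- r | P i) F i) <= \sum_(i <- r | P i) enorm (F i).
Proof.
elim/big_rec2: _ => [|i s w _ h]; first by rewrite enorm0.
by apply: le_trans (enormD _ _) _; rewrite lerD2l.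
Qed.

Lemma ball_set_convex r : convex_set_of (ball r).
Proof.
move=> u v hu hv th /andP[th0 th1]; rewrite /ball_set /=.
apply: le_trans (enormD _ _) _; rewrite !enormZ !ger0_norm ?subr_ge0 //.
have := ler_wpM2l th0 hu; have := ler_wpM2l (_ : 0 <= 1 - th) hv; lra.
Qed.

Lemma enorm_sub_ball r u v : ball r u -> ball r v -> enorm (u - v) <= 2 * r.
Proof.
rewrite /ball_set /= => hu hv.
by apply: le_trans (enormD _ _) _; rewrite enormN; lra.
Qed.

End Euclid.

Section Subgradient.
Variables (R : realType) (n : nat).
Implicit Types (phi g : 'rV[R]_n -> R) (P Q : pred 'I_n) (c d u x z h : 'rV[R]_n).
Local Notation unitv k := (delta_mx ord0 k : 'rV[R]_n).
Local Notation convex g := (convex_fun_on setT g).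

Lemma dotv_unitv c k : dotv c (unitv k) = c ord0 k.
Proof.
rewrite /dotv (bigD1 k) //= mxE !eqxx mulr1 big1 ?addr0 // => j /negbTE jk.
by rewrite mxE jk andbF mulr0.
Qed.

(* Subgradients are built as in the finite-dimensional Hahn-Banach theorem: a linear
   minorant [c] of a convex [phi] on the vectors supported by [P] is extended to one
   more coordinate at a time. *)
Definition supported P d := forall i : 'I_n, ~~ P i -> d ord0 i = 0.

Definition minorant_on phi P c := forall d, supported P d -> dotv c d <= phi d.

Lemma supported_pred0 d : supported pred0 d -> d = 0.
Proof. by move=> d0; apply/rowP => i; rewrite mxE d0. Qed.

Lemma minorant_on_sub phi P Q c :
  (forall i, Q i -> P i) -> minorant_on phi P c -> minorant_on phi Q c.
Proof.
move=> QP mc d dQ; apply: mc => i /negP Pi; apply: dQ; apply/negP => /QP.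
exact: Pi.
Qed.

Lemma convex_fun_affine_comp g (L : 'rV[R]_n -> 'rV[R]_n) C : convex g ->
  (forall a b th, L (th *: a + (1 - th) *: b) = th *: L a + (1 - th) *: L b) ->
  convex (fun d => g (L d) - C).
Proof.
move=> cg affL a b _ _ th th01 /=; rewrite affL.
by have := cg (L a) (L b) I I th th01; lra.
Qed.

Lemma minorant_slope_le phi P c k d1 d2 s t : convex phi -> minorant_on phi P c ->
  supported P d1 -> supported P d2 -> 0 < s -> 0 < t ->
  (dotv c d1 - phi (d1 - s *: unitv k)) / s <= (phi (d2 + t *: unitv k) - dotv c d2) / t.
Proof.
move=> cphi mc d1P d2P s_gt0 t_gt0.
rewrite ler_pdivlMr // mulrAC ler_pdivrMr //.
have st_gt0 : 0 < s + t by lra.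
set th := t / (s + t).
have th_st : th * (s + t) = t by rewrite divfK ?gt_eqF.
have th_st' : (1 - th) * (s + t) = s by rewrite mulrBl mul1r th_st addrK.
have th01 : 0 <= th <= 1.
  by apply/andP; split; [apply: divr_ge0 | rewrite ler_pdivrMr // mul1r]; lra.
have mid : th *: (d1 - s *: unitv k) + (1 - th) *: (d2 + t *: unitv k)
    = th *: d1 + (1 - th) *: d2.
  by apply/rowP => i; rewrite !mxE /th; field; rewrite gt_eqF.
have := cphi (d1 - s *: unitv k) (d2 + t *: unitv k) I I th th01; rewrite mid.
have midP : supported P (th *: d1 + (1 - th) *: d2).
  by move=> i Pi; rewrite !mxE (d1P i Pi) (d2P i Pi); ring.
have := mc _ midP; rewrite dotvDr !dotvZr => hv hc.
have key : th * (dotv c d1 - phi (d1 - s *: unitv k))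
    <= (1 - th) * (phi (d2 + t *: unitv k) - dotv c d2) by lra.
have := ler_wpM2r (ltW st_gt0) key.
by rewrite mulrAC th_st mulrC mulrAC th_st' [X in _ -> _ <= X]mulrC.
Qed.

Lemma minorant_extend phi P c k b : convex phi -> minorant_on phi P c ->
  (forall d t, supported P d -> 0 < t -> b <= (phi (d + t *: unitv k) - dotv c d) / t) ->
  exists c', [/\ minorant_on phi (predU P (pred1 k)) c', b <= c' ord0 k &
    forall i : 'I_n, i != k -> c' ord0 i = c ord0 i].
Proof.
move=> cphi mc b_le.
have P0 : supported P 0 by move=> i _; rewrite mxE.
pose A := [set (dotv c d - phi (d - s *: unitv k)) / s
  | d in supported P & s in [set s | 0 < s]].
have A0 : A !=set0.
  exists ((dotv c 0 - phi (0 - 1 *: unitv k)) / 1), 0 => //.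
  by exists 1 => //=; exact: ltr01.
have A_ub : ubound A ((phi (0 + 1 *: unitv k) - dotv c 0) / 1).
  by move=> _ [d dP [s s_gt0 <-]]; exact: minorant_slope_le cphi mc dP P0 s_gt0 ltr01.
(* The new coordinate [gam] must lie between the slopes of [phi] on the two sides of
   the subspace, which [minorant_slope_le] makes possible. *)
set gam := Num.max (sup A) b.
have gam_upper d t : supported P d -> 0 < t ->
    gam <= (phi (d + t *: unitv k) - dotv c d) / t.
  move=> dP t_gt0; rewrite ge_max b_le // andbT.
  apply: ge_sup => // _ [d' d'P [s s_gt0 <-]].
  exact: minorant_slope_le cphi mc d'P dP s_gt0 t_gt0.
have gam_lower d s : supported P d -> 0 < s ->
    (dotv c d - phi (d - s *: unitv k)) / s <= gam.
  move=> dP s_gt0; rewrite le_max; apply/orP; left; apply: ub_le_sup.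
    by exists ((phi (0 + 1 *: unitv k) - dotv c 0) / 1).
  by exists d => //; exists s.
exists (c + (gam - c ord0 k) *: unitv k); split; first last.
- by move=> i /negPf ik; rewrite !mxE eqxx ik mulr0 addr0.
- by rewrite !mxE !eqxx mulr1 addrC subrK le_max lexx orbT.
move=> d dPk; set s := d ord0 k; set d' := d - s *: unitv k.
have d'P : supported P d'.
  move=> i Pi; rewrite !mxE /s.
  have [->|ik] := eqVneq i k; first by rewrite !eqxx mulr1 subrr.
  by rewrite andbF mulr0 subr0 dPk //= negb_or Pi ik.
have dd' : d = d' + s *: unitv k by rewrite subrK.
have cd : dotv (c + (gam - c ord0 k) *: unitv k) d = dotv c d' + gam * s.
  by rewrite /d' dotvDl dotvZl dotvBr dotvZr (dotvC (unitv k)) !dotv_unitv -/s; ring.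
rewrite cd; have [s_lt0|s_gt0|s0] := ltgtP s 0.
- have := gam_lower d' (- s) d'P; rewrite oppr_gt0 scaleNr opprK -dd' => /(_ s_lt0).
  by rewrite ler_pdivrMr ?oppr_gt0 //; lra.
- by have := gam_upper d' s d'P s_gt0; rewrite -dd' ler_pdivlMr //; lra.
- by rewrite s0 mulr0 addr0 dd' s0 scale0r addr0; exact: mc.
Qed.


Lemma minorant_complete phi P c : convex phi -> minorant_on phi P c ->
  exists c', minorant_on phi predT c' /\ forall i, P i -> c' ord0 i = c ord0 i.
Proof.
move=> cphi mc.
suff /(_ n) [c' [mc' agree]] : forall m, exists c',
    minorant_on phi [pred i | P i || (i < m)%N] c' /\ forall i, P i -> c' ord0 i = c ord0 i.
  by exists c'; split=> //; apply: minorant_on_sub mc' => i _; rewrite /= ltn_ord orbT.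
elim=> [|m [c' [mc' agree]]].
  by exists c; split=> //; apply: minorant_on_sub mc => i /=; rewrite orbF.
have [m_lt_n|n_le_m] := ltnP m n; last first.
  exists c'; split=> //; apply: minorant_on_sub mc' => i /=.
  by rewrite ltnS => /orP[->//|i_le_m]; rewrite (leq_trans (ltn_ord i) n_le_m) orbT.
pose k := Ordinal m_lt_n.
have sub i : P i || (i < m.+1)%N -> (P i || (i < m)%N) || (i == k).
  rewrite ltnS leq_eqVlt => /or3P[->//|/eqP i_m|->]; last by rewrite orbT.
  by apply/orP; right; apply/eqP/val_inj.
have [Pk|Pk] := boolP (P k).
  exists c'; split=> //; apply: minorant_on_sub mc' => i /sub /orP[//|/eqP->].
  by rewrite /= Pk.
have P0 : supported [pred i | P i || (i < m)%N] 0 by move=> i _; rewrite mxE.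
have [c'' [mc'' _ agree'']] := minorant_extend cphi mc'
  (fun d t dP t_gt0 => minorant_slope_le k cphi mc' P0 dP ltr01 t_gt0).
exists c''; split; first exact: minorant_on_sub mc''.
by move=> i Pi; rewrite agree'' ?agree //; apply: contraNneq Pk => <-.
Qed.


Lemma subgrad_exists g x : convex g -> exists h, subgrad g x h.
Proof.
move=> cg.
have cphi := convex_fun_affine_comp (L := fun d => x + d) (g x) cg
  (fun a b th => ltac:(by apply/rowP => i; rewrite !mxE; ring)).
have mc0 : minorant_on (fun d => g (x + d) - g x) pred0 0.
  by move=> d /supported_pred0 ->; rewrite dotv0l addr0 subrr.
have [c [mc _]] := minorant_complete cphi mc0.
by exists c => z; have /= := mc (z - x) (fun i => ltac:(done)); rewrite (addrC x) subrK; lra.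
Qed.

Lemma subgrad_exists_dir g x u b : convex g ->
  (forall t, 0 < t -> g x + t * b <= g (x + t *: u)) ->
  exists2 h, subgrad g x h & b <= dotv h u.
Proof.
move=> cg; have [->|u0] := eqVneq u 0 => b_le.
  have [h hg] := subgrad_exists x cg; exists h => //.
  by have := b_le 1 ltr01; rewrite scaler0 addr0 mul1r dotv0r; lra.
have [j uj] : exists j, u ord0 j != 0.
  case: (pickP (fun j => u ord0 j != 0)) => [j|none]; first by exists j.
  by case/eqP: u0; apply/rowP => i; rewrite mxE; apply/eqP/negbFE/none.
(* [L] is an affine bijection mapping [t *: unitv j] to [x + t *: u], so a minorant of
   [g \o L] with large [j]-th coordinate pulls back to a subgradient of [g] at [x] with
   large slope along [u]. *)
set w := u - unitv j; pose L d := x + (d + d ord0 j *: w).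
have cphi := convex_fun_affine_comp (L := L) (g x) cg
  (fun a b th => ltac:(by apply/rowP => i; rewrite !mxE; ring)).
have mc0 : minorant_on (fun d => g (L d) - g x) pred0 0.
  by move=> d /supported_pred0 ->; rewrite dotv0l /L mxE scale0r !addr0 subrr.
have L_unitv t : L (t *: unitv j) = x + t *: u.
  by apply/rowP => i; rewrite /L /w !mxE !eqxx /=; ring.
have slope d t : supported pred0 d -> 0 < t ->
    b <= (g (L (d + t *: unitv j)) - g x - dotv 0 d) / t.
  move=> /supported_pred0 -> t_gt0; rewrite add0r dotv0l subr0 L_unitv ler_pdivlMr //.
  by have := b_le t t_gt0; lra.
have [c1 [mc1 c1j _]] := minorant_extend cphi mc0 slope.
have [c [mc c_c1]] := minorant_complete cphi mc1.
exists (c - (dotv c w / u ord0 j) *: unitv j).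
  move=> z; set v := z - x; set d := v - (v ord0 j / u ord0 j) *: w.
  have Ld : L d = z by apply/rowP => i; rewrite /L /d /w /v !mxE !eqxx /=; field.
  have := mc d (fun i => ltac:(done)); rewrite Ld.
  have -> : dotv c d = dotv (c - (dotv c w / u ord0 j) *: unitv j) v.
    by rewrite /d dotvBr dotvZr dotvBl dotvZl (dotvC (unitv j)) dotv_unitv; ring.
  lra.
have cw : dotv c w = dotv c u - c ord0 j by rewrite /w dotvBr dotv_unitv.
have cj : c ord0 j = c1 ord0 j by apply: c_c1; rewrite /= eqxx.
by rewrite dotvBl dotvZl (dotvC (unitv j)) dotv_unitv divfK // cw cj; lra.
Qed.

Lemma convex_fun_segment g x h t : convex g -> 0 <= t <= 1 ->
  g (x + t *: h) <= g x + t * (g (x + h) - g x).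
Proof.
move=> cg t01; have := cg (x + h) x I I t t01.
have -> : t *: (x + h) + (1 - t) *: x = x + t *: h by apply/rowP => i; rewrite !mxE; ring.
lra.
Qed.

Lemma convex_fun_lt0_near g x h : convex g -> g x < 0 ->
  exists2 t, 0 < t & g (x + t *: h) < 0.
Proof.
move=> cg gx_lt0; set a := - g x; set D := `|g (x + h) - g x|.
have a_gt0 : 0 < a by rewrite oppr_gt0.
have D_ge0 : 0 <= D := normr_ge0 _.
have aD_gt0 : 0 < a + D by lra.
exists (a / (a + D)); first exact: divr_gt0.
have t01 : 0 <= a / (a + D) <= 1.
  by apply/andP; split; [apply: divr_ge0 | rewrite ler_pdivrMr // mul1r]; lra.
apply: le_lt_trans (convex_fun_segment _ _ cg t01) _.
have tD : a / (a + D) * (g (x + h) - g x) <= a / (a + D) * D.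
  by rewrite ler_wpM2l ?ler_norm ?(proj1 (andP t01)).
have : a / (a + D) * D < a.
  by rewrite mulrAC ltr_pdivrMr // mulrDr ltrDr mulr_gt0.
by rewrite /a in tD *; lra.
Qed.

Lemma posp_ge0 g x : 0 <= posp g x.
Proof. by rewrite /posp le_max lexx orbT. Qed.

Lemma posp_gt0 g x : (0 < posp g x) = (0 < g x).
Proof. by rewrite /posp lt_max ltxx orbF. Qed.

Lemma posp_le0 g x : g x <= 0 -> posp g x = 0.
Proof. exact: max_r. Qed.

(* If [g x < 0] then [posp g] vanishes near [x], forcing [h = 0]; otherwise [g] grows
   at rate [<h, h>] along [h], and the max formula gives a subgradient [h'] of [g] with
   [<h, h> <= <h', h>].  Even the case [h = 0] needs some subgradient of [g] to get [0 <= G]. *)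
Lemma posp_subgrad_norm_le g x h G : convex g ->
  (forall h', subgrad g x h' -> enorm h' <= G) -> subgrad (posp g) x h -> enorm h <= G.
Proof.
move=> cg G_bd hh; have [h0 /G_bd h0_le] := subgrad_exists x cg.
have [->|h_ne0] := eqVneq h 0; first by rewrite enorm0 (le_trans (enorm_ge0 h0)).
have hh_gt0 : 0 < dotv h h by rewrite lt_def dotvv_eq0 h_ne0 dotvv_ge0.
have step t : x + t *: h - x = t *: h by rewrite addrC addKr.
have rise t : 0 < t -> posp g x + t * dotv h h <= posp g (x + t *: h).
  by move=> t_gt0; have := hh (x + t *: h); rewrite step dotvZr.
have rise_gt0 t : 0 < t -> 0 < g (x + t *: h).
  move=> t_gt0; rewrite -posp_gt0; apply: lt_le_trans (rise t t_gt0).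
  exact: ltr_wpDl (posp_ge0 g x) (mulr_gt0 t_gt0 hh_gt0).
have [gx_ge0|gx_lt0] := leP 0 (g x); last first.
  have [t t_gt0] := convex_fun_lt0_near h cg gx_lt0.
  by move/lt_trans/(_ (rise_gt0 t t_gt0)); rewrite ltxx.
have rise_g t : 0 < t -> g x + t * dotv h h <= g (x + t *: h).
  move=> t_gt0; have := rise t t_gt0.
  by rewrite /posp (max_l gx_ge0) (max_l (ltW (rise_gt0 t t_gt0))).
have [h' /G_bd h'_le hh'] := subgrad_exists_dir cg rise_g.
have h_gt0 : 0 < enorm h by rewrite sqrtr_gt0.
have := le_trans hh' (cauchy_schwarz h' h); rewrite -enorm_sqr expr2 ler_pM2r //.
by move/le_trans; apply.
Qed.

End Subgradient.

Section Projection.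
Variables (R : realType) (n : nat).
Implicit Types (S : set 'rV[R]_n) (v x y z p : 'rV[R]_n).

Lemma proj_variational S v p z :
  convex_set_of S -> Defs.proj S v p -> S z -> dotv (v - p) (z - p) <= 0.
Proof.
move=> convS [Sp p_min] Sz.
set a := dotv (v - p) (z - p); set C := dotv (z - p) (z - p).
have C_ge0 : 0 <= C := dotvv_ge0 _.
have slope t : 0 < t <= 1 -> 2 * a <= t * C.
  case/andP=> t_gt0 t_le1.
  have St : S (t *: z + (1 - t) *: p) by apply: convS; rewrite ?(ltW t_gt0).
  have := p_min _ St; rewrite -(ler_pXn2r (_ : 0 < 2)%N) ?nnegrE ?enorm_ge0 //.
  have -> : v - (t *: z + (1 - t) *: p) = (v - p) + (- t) *: (z - p).
    by apply/rowP => i; rewrite !mxE; ring.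
  rewrite !enorm_sqr dotvDZ -/a -/C sqrrN => h.
  by rewrite -(ler_pM2l t_gt0); lra.
rewrite leNgt; apply/negP => a_gt0.
have aC_gt0 : 0 < a + C by lra.
have := slope (a / (a + C)); rewrite divr_gt0 // ler_pdivrMr // mul1r.
by rewrite mulrAC ler_pdivlMr //; nra.
Qed.

Lemma proj_dist_le S v p z :
  convex_set_of S -> Defs.proj S v p -> S z -> enorm (p - z) ^+ 2 <= enorm (v - z) ^+ 2.
Proof.
move=> convS hp Sz; have := proj_variational convS hp Sz.
have -> : z - p = (-1) *: (p - z) by apply/rowP => i; rewrite !mxE; ring.
have -> : v - z = (p - z) + 1 *: (v - p) by apply/rowP => i; rewrite !mxE; ring.
rewrite dotvZr dotvC !enorm_sqr dotvDZ.
by have := dotvv_ge0 (v - p); lra.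
Qed.

Lemma FW_run_sound S eps x y out :
  convex_set_of S -> FW_run S eps x y out -> S x ->
  S out /\ exists2 v, LOO S (out - y) v &
    dotv (out - y) (out - v) <= eps \/ enorm (out - y) ^+ 2 <= 3 * eps.
Proof.
move=> convS.
elim=> {x y out} [x y v hv stop Sx|x y v sig out [Sv _] _ sig01 _ _ IH Sx].
  by split=> //; exists v.
apply: IH; have -> : x + sig *: (v - x) = sig *: v + (1 - sig) *: x.
  by apply/rowP => i; rewrite !mxE; ring.
exact: convS.
Qed.

(* The Frank-Wolfe gap gives [<x - y, x - z> <= eps] for all [z] in [S]; since
   [|x - y|^2 > 3 eps], moving [y] two thirds of the way to [x] brings it closer to [z]. *)
Lemma AFP_step_dist_le S eps x y v z : LOO S (x - y) v -> S z ->
  dotv (x - y) (x - v) <= eps -> 3 * eps < enorm (x - y) ^+ 2 ->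
  enorm (y - (2 / 3) *: (y - x) - z) ^+ 2 <= enorm (y - z) ^+ 2.
Proof.
move=> [_ v_min] Sz stop far; set w := x - y.
have wxz : dotv w (x - z) <= eps.
  by apply: le_trans stop; rewrite !dotvBr lerD2l lerN2 v_min.
have -> : y - (2 / 3) *: (y - x) - z = (y - z) + (2 / 3) *: w.
  by apply/rowP => i; rewrite !mxE; ring.
have yzw : dotv (y - z) w = dotv w (x - z) - dotv w w.
  by rewrite dotvC -dotvBr; congr dotv; apply/rowP => i; rewrite !mxE; ring.
rewrite !enorm_sqr dotvDZ -/w yzw in far *.
by have := dotvv_ge0 w; lra.
Qed.

Lemma AFP_loop_sound S eps xp y xo yo :
  convex_set_of S -> AFP_loop S eps xp y xo yo -> S xp ->
  [/\ S xo, enorm (xo - yo) ^+ 2 <= 3 * eps &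
      forall z, S z -> enorm (yo - z) ^+ 2 <= enorm (y - z) ^+ 2].
Proof.
move=> convS; elim=> {xp y xo yo} [xp y x fw close Sxp|xp y x xo yo fw far _ IH Sxp].
  by have [Sx _] := FW_run_sound convS fw Sxp.
have [Sx [v hv stop]] := FW_run_sound convS fw Sxp.
have {}stop : dotv (x - y) (x - v) <= eps by case: stop => //; lra.
have [Sxo close dist] := IH Sx; split=> // z Sz.
exact: le_trans (dist z Sz) (AFP_step_dist_le hv Sz stop far).
Qed.

Lemma AFP_run_sound S eps y1 x0 xo yo :
  convex_set_of S -> AFP_run S eps y1 x0 xo yo -> S x0 ->
  [/\ S xo, enorm (xo - yo) ^+ 2 <= 3 * eps &
      forall z, S z -> enorm (yo - z) ^+ 2 <= enorm (y1 - z) ^+ 2].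
Proof.
by move=> convS [[close [-> ->]]|[_ loop]] Sx0; last exact: AFP_loop_sound loop Sx0.
Qed.

End Projection.


Lemma sum_blocks (R : nmodType) (F : nat -> R) (M K : nat) :
  \sum_(1 <= t < (M * K).+1) F t =
  \sum_(1 <= m < M.+1) \sum_((m.-1 * K).+1 <= t < (m * K).+1) F t.
Proof.
elim: M => [|M IH]; first by rewrite mul0n !big_geq.
rewrite (big_cat_nat _ (n := (M * K).+1)) //=; last by rewrite ltnS leq_mul2r leqnSn orbT.
by rewrite IH [in RHS]big_nat_recr.
Qed.

Lemma mblk_block (K m t : nat) : (0 < K)%N -> (0 < m)%N ->
  ((m.-1 * K).+1 <= t < (m * K).+1)%N -> mblk K t = m.
Proof.
case: m => // m K_gt0 _; rewrite /= mulSn => /andP[lo hi].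
rewrite /mblk; congr S.
have -> : t.-1 = (m * K + (t.-1 - m * K))%N by lia.
by rewrite divnMDl // divn_small ?addn0 //; lia.
Qed.

Lemma block_size (K m : nat) : (0 < m)%N -> ((m * K).+1 - (m.-1 * K).+1)%N = K.
Proof. by case: m => // m _; rewrite subSS /= mulSn addnK. Qed.

Lemma ler_sum_telescope (R : numDomainType) (S r u : nat -> R) (c : R) (M : nat) :
  (forall m, (1 <= m <= M)%N -> S m <= (u m - u m.+1) * c + r m) ->
  \sum_(1 <= m < M.+1) S m <= (u 1%N - u M.+1) * c + \sum_(1 <= m < M.+1) r m.
Proof.
move=> S_le; apply: le_trans (ler_sum_nat (m := 1) (n := M.+1) S_le) _.
rewrite big_split /= -mulr_suml.
have -> // : \sum_(1 <= m < M.+1) (u m - u m.+1) = u 1%N - u M.+1.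
by rewrite -opprB -telescope_sumr // -sumrN; apply: eq_bigr => m _; rewrite opprB.
Qed.

Lemma descent_step_le (R : realType) (n : nat) (eta : R) (G y y' z : 'rV[R]_n) : 0 < eta ->
  enorm (y' - z) ^+ 2 <= enorm (y - eta *: G - z) ^+ 2 ->
  dotv G (y - z)
    <= (enorm (y - z) ^+ 2 - enorm (y' - z) ^+ 2) / (2 * eta) + eta / 2 * enorm G ^+ 2.
Proof.
move=> eta_gt0; have -> : y - eta *: G - z = (y - z) + (- eta) *: G.
  by apply/rowP => i; rewrite !mxE; ring.
rewrite !enorm_sqr dotvDZ (dotvC (y - z)) => h.
have -> : eta / 2 * dotv G G = eta ^+ 2 * dotv G G / (2 * eta).
  by field; rewrite gt_eqF.
by rewrite -mulrDl ler_pdivlMr ?mulr_gt0 //; lra.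
Qed.

Lemma ascent_step_le (R : realType) (eta lam gam l : R) : 0 < eta -> 0 <= l ->
  (l - lam) * gam <=
    ((lam - l) ^+ 2 - (Num.max 0 (lam + eta * gam) - l) ^+ 2) / (2 * eta) + eta / 2 * gam ^+ 2.
Proof.
move=> eta_gt0 l_ge0.
have proj_le : (Num.max 0 (lam + eta * gam) - l) ^+ 2 <= (lam + eta * gam - l) ^+ 2.
  by have [//|w_lt0] := leP 0 (lam + eta * gam); nra.
have -> : eta / 2 * gam ^+ 2 = eta ^+ 2 * gam ^+ 2 / (2 * eta) by field; rewrite gt_eqF.
by rewrite -mulrDl ler_pdivlMr ?mulr_gt0 //; nra.
Qed.

Lemma lagr_gap_le (R : realType) (n : nat) (delta eta l lam : R) (ft gt : 'rV[R]_n -> R)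
    (x xh hf hg : 'rV[R]_n) :
  0 <= delta * eta -> 0 <= lam -> subgrad ft x hf -> subgrad (posp gt) x hg -> gt xh <= 0 ->
  lagr delta eta ft gt x l - lagr delta eta ft gt xh lam
    <= dotv (hf + lam *: hg) (x - xh) + (l - lam) * (posp gt x - delta * eta * lam).
Proof.
move=> de_ge0 lam_ge0 hf_sub hg_sub gxh_le0.
have := hf_sub xh; have := hg_sub xh.
rewrite /lagr (posp_le0 gxh_le0) dotvDl dotvZl !dotvBr => hg_le hf_le.
have : lam * (posp gt x + (dotv hg xh - dotv hg x)) <= 0 by rewrite mulr_ge0_le0.
have : 0 <= delta * eta * (l - lam) ^+ 2 by rewrite mulr_ge0 ?sqr_ge0.
nra.
Qed.


Section PrimalDual.
Variables (R : realType) (n : nat) (Kset : set 'rV[R]_n) (Rad Gf Gg : R) (T K : nat)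
  (eps delta eta : R) (f g : nat -> 'rV[R]_n -> R) (x yt y : nat -> 'rV[R]_n) (lam : R^nat)
  (df dg : nat -> 'rV[R]_n).
Local Notation ball := (@ball_set R n Rad).
Local Notation M := (T %/ K)%N.
Hypotheses (Kset_convex : convex_set_of Kset) (Kset_ball : Kset `<=` ball)
  (g_convex : forall t, (1 <= t <= T)%N -> convex_fun_on setT (g t))
  (df_bound : forall t, (1 <= t <= T)%N ->
     forall z h, ball z -> subgrad (f t) z h -> enorm h <= Gf)
  (dg_bound : forall t, (1 <= t <= T)%N ->
     forall z h, ball z -> subgrad (g t) z h -> enorm h <= Gg)
  (K_gt0 : (0 < K)%N) (eps_gt0 : 0 < eps) (delta_gt0 : 0 < delta) (eta_gt0 : 0 < eta)
  (run : PD_run Kset Rad T K eps delta eta f g x yt y lam df dg).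

Let pgrad m := \sum_((m.-1 * K).+1 <= t < (m * K).+1) (df t + lam m *: dg t).
Let dgrad m :=
  \sum_((m.-1 * K).+1 <= t < (m * K).+1) (posp (g t) (x m) - delta * eta * lam m).

Lemma PD_invariant m : (1 <= m <= M.+1)%N ->
  [/\ Kset (x m), enorm (x m - yt m) ^+ 2 <= 3 * eps & 0 <= lam m].
Proof.
case: run => Kx1 yt1 lam1 _ step; elim: m => // -[_ _|m IH /andP[_ m_le]].
  by rewrite yt1 subrr enorm0 lam1 expr0n /= mulr_ge0 // ltW.
have [Kxm _ lam_ge0] := IH (leqW m_le).
have [_ afp ->] := step m.+1 m_le.
have [Kx' close _] := AFP_run_sound Kset_convex afp Kxm.
by split=> //; rewrite le_max lexx.
Qed.

Lemma block_round m t : (1 <= m <= M)%N -> ((m.-1 * K).+1 <= t < (m * K).+1)%N ->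
  (1 <= t <= T)%N /\ mblk K t = m.
Proof.
move=> /andP[m_gt0 m_le] t_in; rewrite (mblk_block K_gt0 m_gt0 t_in); split=> //.
have : (m * K <= M * K)%N by rewrite leq_mul2r m_le orbT.
have := leq_divM T K; move: t_in; lia.
Qed.

Lemma round_subgrad m t : (1 <= m <= M)%N -> ((m.-1 * K).+1 <= t < (m * K).+1)%N ->
  [/\ (1 <= t <= T)%N, subgrad (f t) (x m) (df t) & subgrad (posp (g t)) (x m) (dg t)].
Proof.
move=> hm t_in; have [tT <-] := block_round hm t_in.
by case: run => _ _ _ sub _; have [] := sub t tT.
Qed.

Lemma block_pgrad_norm_le m : (1 <= m <= M)%N ->
  enorm (pgrad m) <= K%:R * (Gf + lam m * Gg).
Proof.
move=> hm; have [Kxm _ lam_ge0] := PD_invariant (m := m) ltac:(lia).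
apply: le_trans (enorm_sum _ _ _) _.
rewrite -[X in _ <= X%:R * _](block_size K (m := m)) ?(andP hm).1 //.
rewrite mulr_natl -sumr_const_nat.
apply: ler_sum_nat => t t_in; have [tT hf hg] := round_subgrad hm t_in.
apply: le_trans (enormD _ _) _; rewrite enormZ ger0_norm //.
rewrite lerD ?ler_wpM2l ?(df_bound tT (Kset_ball Kxm) hf) //.
exact: posp_subgrad_norm_le (g_convex tT) (fun h => dg_bound tT (Kset_ball Kxm)) hg.
Qed.

Variables (xh : 'rV[R]_n) (l : R).
Hypotheses (Kxh : Kset xh) (gxh : forall t, (1 <= t <= T)%N -> g t xh <= 0) (l_ge0 : 0 <= l).

Lemma block_constraint_le m : (1 <= m <= M)%N ->
  \sum_((m.-1 * K).+1 <= t < (m * K).+1) posp (g t) (x m) <= K%:R * (2 * Rad * Gg).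
Proof.
move=> hm; have [Kxm _ _] := PD_invariant (m := m) ltac:(lia).
rewrite -[X in _ <= X%:R * _](block_size K (m := m)) ?(andP hm).1 //.
rewrite mulr_natl -sumr_const_nat.
apply: ler_sum_nat => t t_in; have [tT _ hg] := round_subgrad hm t_in.
have := hg xh; rewrite (posp_le0 (gxh tT)) dotvBr.
have := cauchy_schwarz (dg t) (x m - xh); rewrite dotvBr.
have := ler_pM (enorm_ge0 _) (enorm_ge0 _)
  (posp_subgrad_norm_le (g_convex tT) (fun h => dg_bound tT (Kset_ball Kxm)) hg)
  (enorm_sub_ball (Kset_ball Kxm) (Kset_ball Kxh)).
lra.
Qed.



Lemma block_gap_le m : (1 <= m <= M)%N ->
  \sum_((m.-1 * K).+1 <= t < (m * K).+1)
     (lagr delta eta (f t) (g t) (x (mblk K t)) l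
      - lagr delta eta (f t) (g t) xh (lam (mblk K t)))
  <= dotv (pgrad m) (x m - xh) + (l - lam m) * dgrad m.
Proof.
move=> hm; have [_ _ lam_ge0] := PD_invariant (m := m) ltac:(lia).
rewrite /pgrad /dgrad dotv_suml mulr_sumr -big_split /=; apply: ler_sum_nat => t t_in.
have [tT hf hg] := round_subgrad hm t_in; have [_ ->] := block_round hm t_in.
by apply: lagr_gap_le hf hg (gxh tT) => //; rewrite mulr_ge0 ?ltW.
Qed.

Lemma block_primal_le m : (1 <= m <= M)%N ->
  dotv (pgrad m) (x m - xh) <=
    (enorm (yt m - xh) ^+ 2 - enorm (yt m.+1 - xh) ^+ 2) / (2 * eta)
    + eta / 2 * enorm (pgrad m) ^+ 2 + enorm (pgrad m) * Num.sqrt (3 * eps).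
Proof.
move=> hm; have [Kxm close _] := PD_invariant (m := m) ltac:(lia).
have [proj_step afp _] := (let: And5 _ _ _ _ step := run in step m hm).
have [_ _ afp_dist] := AFP_run_sound Kset_convex afp Kxm.
have := descent_step_le eta_gt0 (le_trans (afp_dist xh Kxh)
  (proj_dist_le (@ball_set_convex _ n Rad) proj_step (Kset_ball Kxh))).
have close' : enorm (x m - yt m) <= Num.sqrt (3 * eps).
  by rewrite -[enorm _]ger0_norm ?enorm_ge0 // -sqrtr_sqr ler_wsqrtr.
have := le_trans (cauchy_schwarz (pgrad m) (x m - yt m)) (ler_wpM2l (enorm_ge0 _) close').
rewrite !dotvBr; lra.
Qed.

Lemma block_dual_le m : (1 <= m <= M)%N ->
  (l - lam m) * dgrad m <=
    ((lam m - l) ^+ 2 - (lam m.+1 - l) ^+ 2) / (2 * eta) + eta / 2 * dgrad m ^+ 2.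
Proof.
move=> hm; have [_ _ ->] : _ := (let: And5 _ _ _ _ step := run in step m hm).
exact: ascent_step_le.
Qed.

Lemma block_dgrad_sqr_le m : (1 <= m <= M)%N ->
  dgrad m ^+ 2
    <= 2 * (K%:R * (2 * Rad * Gg)) ^+ 2 + 2 * (K%:R * (delta * eta * lam m)) ^+ 2.
Proof.
move=> hm; have P_le := block_constraint_le hm.
have P_ge0 : 0 <= \sum_((m.-1 * K).+1 <= t < (m * K).+1) posp (g t) (x m).
  by apply: sumr_ge0 => t _; apply: posp_ge0.
rewrite /dgrad sumrB sumr_const_nat block_size ?(andP hm).1 // mulr_natl.
have := sqr_ge0 (\sum_((m.-1 * K).+1 <= t < (m * K).+1) posp (g t) (x m)
  + K%:R * (delta * eta * lam m)).
nra.
Qed.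

Let pot m := enorm (yt m - xh) ^+ 2 + (lam m - l) ^+ 2.

Lemma PD_block_bound m : (1 <= m <= M)%N ->
  \sum_((m.-1 * K).+1 <= t < (m * K).+1)
     (lagr delta eta (f t) (g t) (x (mblk K t)) l
      - lagr delta eta (f t) (g t) xh (lam (mblk K t)))
  <= (pot m - pot m.+1) * (2 * eta)^-1
     + ((eta * K%:R ^+ 2 * Gf ^+ 2 + K%:R * Gf * Num.sqrt (3 * eps)
         + 4 * eta * K%:R ^+ 2 * Rad ^+ 2 * Gg ^+ 2)
        + K%:R * Gg * Num.sqrt (3 * eps) * lam m
        + (delta ^+ 2 * eta ^+ 3 * K%:R ^+ 2 + Gg ^+ 2 * eta * K%:R ^+ 2) * lam m ^+ 2).
Proof.
move=> hm; have [_ _ lam_ge0] := PD_invariant (m := m) ltac:(lia).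
have G_le := block_pgrad_norm_le hm.
have GN_ge0 : 0 <= K%:R * (Gf + lam m * Gg) := le_trans (enorm_ge0 _) G_le.
have G_sqr : eta / 2 * enorm (pgrad m) ^+ 2
    <= eta / 2 * (2 * K%:R ^+ 2 * (Gf ^+ 2 + lam m ^+ 2 * Gg ^+ 2)).
  apply: ler_wpM2l; first by rewrite divr_ge0 // ltW.
  have : enorm (pgrad m) ^+ 2 <= (K%:R * (Gf + lam m * Gg)) ^+ 2.
    by have := enorm_ge0 (pgrad m); nra.
  by have := sqr_ge0 (K%:R * (Gf - lam m * Gg)); lra.
have G_drift : enorm (pgrad m) * Num.sqrt (3 * eps)
    <= K%:R * (Gf + lam m * Gg) * Num.sqrt (3 * eps) by rewrite ler_wpM2r ?sqrtr_ge0.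
have dgrad_sqr : eta / 2 * dgrad m ^+ 2
    <= eta / 2 * (2 * (K%:R * (2 * Rad * Gg)) ^+ 2
                  + 2 * (K%:R * (delta * eta * lam m)) ^+ 2).
  by apply: ler_wpM2l; [rewrite divr_ge0 // ltW | exact: block_dgrad_sqr_le].
have := block_gap_le hm; have := block_primal_le hm; have := block_dual_le hm.
rewrite /pot; lra.
Qed.

Lemma PD_regret_bound :
  \sum_(1 <= t < (M * K).+1)
     (lagr delta eta (f t) (g t) (x (mblk K t)) l
      - lagr delta eta (f t) (g t) xh (lam (mblk K t)))
  <= (4 * Rad ^+ 2 + l ^+ 2) / (2 * eta)
     + M%:R * (eta * K%:R ^+ 2 * Gf ^+ 2 + K%:R * Gf * Num.sqrt (3 * eps)
               + 4 * eta * K%:R ^+ 2 * Rad ^+ 2 * Gg ^+ 2)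
     + K%:R * Gg * Num.sqrt (3 * eps) * \sum_(1 <= m < M.+1) lam m
     + (delta ^+ 2 * eta ^+ 3 * K%:R ^+ 2 + Gg ^+ 2 * eta * K%:R ^+ 2)
       * \sum_(1 <= m < M.+1) lam m ^+ 2.
Proof.
rewrite sum_blocks; apply: le_trans (ler_sum_telescope PD_block_bound) _.
rewrite big_split big_split /= sumr_const_nat subn1 /= -!mulr_sumr -mulr_natl.
have pot1 : pot 1%N <= 4 * Rad ^+ 2 + l ^+ 2.
  rewrite /pot; case: run => Kx1 -> -> _ _; rewrite sub0r sqrrN lerD2r.
  have := enorm_sub_ball (Kset_ball Kx1) (Kset_ball Kxh).
  by have := enorm_ge0 (x 1%N - xh); nra.
have pot_ge0 : 0 <= pot M.+1 by rewrite addr_ge0 ?sqr_ge0.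
have inv_ge0 : 0 <= (2 * eta)^-1 by rewrite invr_ge0 mulr_ge0 // ltW.
have pot_diff : pot 1%N - pot M.+1 <= 4 * Rad ^+ 2 + l ^+ 2 by lra.
have := ler_wpM2r inv_ge0 pot_diff.
lra.
Qed.

End PrimalDual.


Theorem lemma3 (R : realType) (n : nat) (Kset : set 'rV[R]_n) (Rad Gf Gg : R)
  (T K : nat) (eps delta eta : R) (f g : nat -> 'rV[R]_n -> R)
  (x yt y : nat -> 'rV[R]_n) (lam : R^nat) (df dg : nat -> 'rV[R]_n) :
  0 < Rad ->
  convex_set_of Kset -> compact Kset ->
  Kset 0 -> Kset `<=` @ball_set _ n Rad ->
  (forall t, (1 <= t <= T)%N ->
     convex_fun_on [set: 'rV[R]_n] (f t) /\ convex_fun_on [set: 'rV[R]_n] (g t)) ->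
  (forall t, (1 <= t <= T)%N -> forall z h, @ball_set _ n Rad z ->
     subgrad (f t) z h -> enorm h <= Gf) ->
  (forall t, (1 <= t <= T)%N -> forall z h, @ball_set _ n Rad z ->
     subgrad (g t) z h -> enorm h <= Gg) ->
  (0 < K)%N -> (K %| T)%N ->
  0 < eps -> 0 < delta -> 0 < eta ->
  (exists z, Kset z /\ forall t, (1 <= t <= T)%N -> g t z <= 0) ->
  PD_run Kset Rad T K eps delta eta f g x yt y lam df dg ->
  forall (xh : 'rV[R]_n) (l : R),
    Kset xh -> (forall t, (1 <= t <= T)%N -> g t xh <= 0) -> 0 <= l ->
    \sum_(1 <= t < T.+1)
       (lagr delta eta (f t) (g t) (x (mblk K t)) l
        - lagr delta eta (f t) (g t) xh (lam (mblk K t)))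
    <= 2 * Rad ^+ 2 / eta + l ^+ 2 / (2 * eta)
       + Gf * Num.sqrt (3 * eps) * T%:R
       + Gf ^+ 2 * eta * K%:R * T%:R
       + 4 * Gg ^+ 2 * Rad ^+ 2 * eta * K%:R * T%:R
       + Gg * Num.sqrt (3 * eps) * K%:R * \sum_(1 <= m < (T %/ K).+1) lam m
       + (delta ^+ 2 * eta ^+ 3 * K%:R ^+ 2 + Gg ^+ 2 * eta * K%:R ^+ 2)
         * \sum_(1 <= m < (T %/ K).+1) lam m ^+ 2.
Proof.
move=> _ Kset_convex _ _ Kset_ball fg_convex df_bound dg_bound K_gt0 K_dvd eps_gt0 delta_gt0
  eta_gt0 _ run xh l Kxh gxh l_ge0.
have g_convex t tT := (fg_convex t tT).2.
have := PD_regret_bound Kset_convex Kset_ball g_convex df_bound dg_bound K_gt0 eps_gt0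
  delta_gt0 eta_gt0 run Kxh gxh l_ge0.
have -> : (4 * Rad ^+ 2 + l ^+ 2) / (2 * eta) = 2 * Rad ^+ 2 / eta + l ^+ 2 / (2 * eta).
  by field; rewrite gt_eqF.
have T_MK : T%:R = (T %/ K)%:R * K%:R :> R by rewrite -natrM divnK.
rewrite divnK // T_MK; lra.
Qed.
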